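(* Let $M, K, P, N$ be positive integers with $1 < M \le K \le P$. Then there exists a matrix $\mathbf{A} \in \mathbb{R}^{M \times N}$ such that every matrix $\mathbf{F} \in \mathbb{R}^{P \times N}$ with the property that, for every set $\chi \subseteq \{1,\ldots,P\}$ with $|\chi| = K$, the rows of $\mathbf{F}$ indexed by $\chi$ span all the rows of $\mathbf{A}$, satisfies the following: the number $\lambda$ of columns of $\mathbf{F}$ having more than $K-M$ zero entries satisfies $$\lambda < M\binom{P}{K-M+1}.$$ *)

From Stdlib Require Import Reals.
From HB Require Import structures.
From mathcomp Require Import all_boot all_order all_algebra.
From mathcomp Require Import Rstruct.
Set Implicit Arguments. Unset Strict Implicit. Unset Printing Implicit Defensive.
Import Order.TTheory GRing.Theory Num.Theory.
Local Open Scope ring_scope.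

Definition rows_span (M P N : nat) (F : 'M[R]_(P, N)) (chi : {set 'I_P})
  (A : 'M[R]_(M, N)) : Prop :=
  (A <= (\sum_(i in chi) <<row i F>>)%MS)%MS.

Definition ncols_many_zeros (P N : nat) (F : 'M[R]_(P, N)) (t : nat) : nat :=
  #|[set j : 'I_N | (t < #|[set i : 'I_P | F i j == 0%R]|)%N ]|.

(* Take for A the Vandermonde matrix with distinct nodes 1, ..., N: a nonzero
   combination of its rows is a nonzero polynomial of degree < M, so it cannot
   vanish on M columns, i.e. any M columns of A are linearly independent.
   Let Z be a set of K - M + 1 rows of F and J the set of columns on which all
   these rows vanish. Completing Z by M - 1 further rows gives K rows spanning
   the rows of A; restricted to the columns in J, only the M - 1 added rows
   survive, so A restricted to J has rank < M and hence |J| < M.  A column with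
   more than K - M zeros lies in such a J for some Z, and there are
   binomial(P, K - M + 1) choices of Z. *)
From Stdlib Require Import Reals.
From HB Require Import structures.
From mathcomp Require Import all_boot all_order all_algebra.
From mathcomp Require Import Rstruct zify.
Set Implicit Arguments. Unset Strict Implicit. Unset Printing Implicit Defensive.
Import Order.TTheory GRing.Theory Num.Theory.
Local Open Scope ring_scope.

Lemma ex_subset_card (T : finType) (A : {set T}) k :
  (k <= #|A|)%N -> exists2 B : {set T}, B \subset A & #|B| = k.
Proof.
rewrite -bin_gt0 -cards_draws => /card_gt0P [B].
by rewrite inE => /andP [BA /eqP cB]; exists B.
Qed.

Lemma leq_card_bigcup (I T : finType) (Q : pred I) (G : I -> {set T}) :
  (#|\bigcup_(i | Q i) G i| <= \sum_(i | Q i) #|G i|)%N.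
Proof.
elim/big_rec2: _ => [|i U n _ IH]; first by rewrite cards0.
by rewrite (leq_trans (leq_card_setU _ _)) // leq_add2l.
Qed.

Section ColumnMask.

Variable F : fieldType.

Definition colmask n (J : {set 'I_n}) : 'M[F]_n := diag_mx (\row_j (j \in J)%:R).

Lemma colmaskE m n (B : 'M[F]_(m, n)) J i j :
  (B *m colmask J) i j = B i j * (j \in J)%:R.
Proof. by rewrite mul_mx_diag !mxE. Qed.

Lemma horner_rVpoly_Vandermonde m n (c : 'rV[F]_m) (a : 'rV[F]_n) j :
  (rVpoly c).[a 0 j] = (c *m Vandermonde m a) 0 j.
Proof. by rewrite horner_poly !mxE; apply: eq_bigr => k _; rewrite valK !mxE. Qed.

Lemma row_free_Vandermonde_colmask m n (a : 'rV[F]_n) (J : {set 'I_n}) :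
  {in J &, injective (a 0)} -> (m <= #|J|)%N ->
  row_free (Vandermonde m a *m colmask J).
Proof.
move=> a_inj leJ; apply/inj_row_free => c cV0.
apply: (can_inj rVpolyK); rewrite linear0.
have roots : all (root (rVpoly c)) [seq a 0 j | j <- enum J].
  apply/allP => x /mapP [j]; rewrite mem_enum => jJ ->.
  have /rowP/(_ j) := cV0; rewrite mulmxA colmaskE jJ mulr1 => cVj.
  by apply/rootP; rewrite horner_rVpoly_Vandermonde cVj mxE.
apply: (roots_geq_poly_eq0 roots).
  by rewrite map_inj_in_uniq ?enum_uniq // => j1 j2; rewrite !mem_enum; apply: a_inj.
by rewrite size_map -cardE (leq_trans (size_poly _ _) leJ).
Qed.

Lemma mxrank_sumsmx_leq (I : finType) (P : pred I) n (A_ : I -> 'M[F]_n) :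
  (\rank (\sum_(i | P i) A_ i)%MS <= \sum_(i | P i) \rank (A_ i))%N.
Proof.
apply: (big_ind2 (fun (X : 'M[F]_n) r => \rank X <= r)%N) => [||//].
  by rewrite mxrank0.
move=> X1 r1 X2 r2 le1 le2.
exact: leq_trans (mxrank_adds_leqif X1 X2) (leq_add le1 le2).
Qed.

Definition zero_cols p n (B : 'M[F]_(p, n)) (Z : {set 'I_p}) : {set 'I_n} :=
  [set j | [forall i in Z, B i j == 0]].

Lemma row_colmask_zero_cols p n (B : 'M[F]_(p, n)) (Z : {set 'I_p}) i :
  i \in Z -> row i B *m colmask (zero_cols B Z) = 0.
Proof.
move=> iZ; apply/rowP => j; rewrite colmaskE !mxE inE.
by case: forall_inP => [/(_ i iZ)/eqP -> | _]; rewrite (mul0r, mulr0).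
Qed.

Section SpanningRows.

Variables m n p : nat.
Variable A : 'M[F]_(m, n).
Hypothesis A_free : forall J : {set 'I_n}, (m <= #|J|)%N -> row_free (A *m colmask J).

Lemma card_zero_cols_lt (B : 'M[F]_(p, n)) (Z W : {set 'I_p}) :
  (#|W| < m)%N -> (A <= \sum_(i in Z :|: W) <<row i B>>)%MS ->
  (#|zero_cols B Z| < m)%N.
Proof.
move=> ltWm AB; rewrite ltnNge; apply/negP => /A_free.
set D := colmask _; rewrite -row_leq_rank => leAD.
have sub : (A *m D <= \sum_(i in W) <<row i B *m D>>)%MS.
  apply: submx_trans (submxMr D AB) _; rewrite sumsmxMr_gen.
  apply/sumsmx_subP => i; rewrite inE genmxE (eqmxMr D (genmxE _)).
  case/orP => [iZ | iW]; first by rewrite row_colmask_zero_cols // sub0mx.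
  by apply: (sumsmx_sup i); rewrite ?genmxE.
have := leq_trans leAD (leq_trans (mxrankS sub) (mxrank_sumsmx_leq _ _)).
apply/negP; rewrite -ltnNge (leq_ltn_trans _ ltWm) // -sum1_card.
by apply: leq_sum => i _; rewrite mxrank_gen rank_leq_row.
Qed.

Lemma card_zero_cols_lt_of_span k (B : 'M[F]_(p, n)) (Z : {set 'I_p}) :
  (0 < m)%N -> (m <= k)%N -> (k <= p)%N ->
  (forall chi : {set 'I_p}, #|chi| = k -> (A <= \sum_(i in chi) <<row i B>>)%MS) ->
  #|Z| = (k - m).+1 -> (#|zero_cols B Z| < m)%N.
Proof.
move=> m_gt0 le_mk le_kp span cZ.
have [W WZ cW] : exists2 W : {set 'I_p}, W \subset ~: Z & #|W| = m.-1.
  by apply: ex_subset_card; move: (cardsC Z); rewrite card_ord cZ; lia.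
apply: (@card_zero_cols_lt B Z W); first by rewrite cW prednK.
rewrite subsets_disjoint setCK disjoint_sym in WZ.
apply: span; rewrite cardsU disjoint_setI0 // cards0 subn0 cZ cW; lia.
Qed.

End SpanningRows.

End ColumnMask.

Arguments colmask {F n} J.

Lemma ncols_many_zeros_leq P N (B : 'M[R]_(P, N)) t :
  (ncols_many_zeros B t <=
     \sum_(Z in [set Z : {set 'I_P} | #|Z| == t.+1]) #|zero_cols B Z|)%N.
Proof.
apply: leq_trans (leq_card_bigcup _ _); apply/subset_leq_card/subsetP => j.
rewrite inE => /ex_subset_card [Z Zzero cZ]; apply/bigcupP; exists Z.
  by rewrite inE cZ.
by rewrite inE; apply/forall_inP => i /(subsetP Zzero); rewrite inE.
Qed.

Theorem lemma3 (M K P N : nat) (hM : (0 < M)%N) (hK : (0 < K)%N)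
  (hP : (0 < P)%N) (hN : (0 < N)%N)
  (h1M : (1 < M)%N) (hMK : (M <= K)%N) (hKP : (K <= P)%N) :
  exists A : 'M[R]_(M, N),
    forall F : 'M[R]_(P, N),
      (forall chi : {set 'I_P}, #|chi| = K -> rows_span F chi A) ->
      (ncols_many_zeros F (K - M) < M * 'C(P, K - M + 1))%N.
Proof.
pose a : 'rV[R]_N := \row_j (j.+1)%:R.
have a_inj : injective (a 0).
  by move=> j1 j2 /eqP; rewrite !mxE eqr_nat eqSS => /eqP /val_inj.
exists (Vandermonde M a) => F span.
have V_free (J : {set 'I_N}) :
    (M <= #|J|)%N -> row_free (Vandermonde M a *m colmask J).
  exact: row_free_Vandermonde_colmask (in2W a_inj).
apply: leq_ltn_trans (ncols_many_zeros_leq F (K - M)) _.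
apply: (@leq_ltn_trans
  (\sum_(Z in [set Z : {set 'I_P} | #|Z| == (K - M).+1]) M.-1)).
  apply: leq_sum => Z; rewrite inE => /eqP cZ; rewrite -ltnS prednK //.
  exact: (card_zero_cols_lt_of_span V_free hM hMK hKP span cZ).
rewrite sum_nat_const card_draws card_ord addn1 mulnC ltn_mul2r ltn_predL hM andbT.
by rewrite bin_gt0 (leq_trans _ hKP) // ltn_subrL hM hK.
Qed.
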